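(* For any space $X$, $\mathcal{K}(X) =_T \mathcal{K}(\mathcal{K}(X))$.
   Context: All spaces are Tychonoff. $\mathcal{K}(X)$ is the set of compact subsets of $X$ ordered by inclusion and equipped with the Vietoris topology; $\mathcal{K}(\mathcal{K}(X))$ is the set of compact subsets of the space $\mathcal{K}(X)$, ordered by inclusion. For directed sets $P,Q$, $P \ge_T Q$ means there is a map $\phi:P\to Q$ such that $\phi(C)$ is cofinal in $Q$ for every cofinal $C\subseteq P$; $P =_T Q$ means $P\ge_T Q$ and $Q \ge_T P$. *)

From HB Require Import structures.
From mathcomp Require Import all_boot all_order all_algebra.
From mathcomp Require Import all_classical all_reals topology.
From mathcomp Require Import Rstruct Rstruct_topology.
Set Implicit Arguments. Unset Strict Implicit. Unset Printing Implicit Defensive.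
Import Order.TTheory GRing.Theory Num.Theory.
Local Open Scope classical_set_scope.

Definition tychonoff_space (X : topologicalType) : Prop :=
  hausdorff_space X /\
  forall (x : X) (B : set X), closed B -> ~ B x ->
    exists f : X -> Rdefinitions.R,
      continuous f /\ f x = 0%R /\ (forall y, B y -> f y = 1%R).

Definition cofinal (P : Type) (le : P -> P -> Prop) (C : set P) : Prop :=
  forall p : P, exists2 c, C c & le p c.

Definition tukey_ge (P Q : Type) (leP : P -> P -> Prop) (leQ : Q -> Q -> Prop)
  : Prop :=
  exists phi : P -> Q, forall C : set P, cofinal leP C -> cofinal leQ (phi @` C).

Definition tukey_eq (P Q : Type) (leP : P -> P -> Prop) (leQ : Q -> Q -> Prop)
  : Prop := tukey_ge leP leQ /\ tukey_ge leQ leP.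

Definition Kspace (X : topologicalType) : Type := {A : set X | compact A}.

Section Vietoris.
Context (X : topologicalType).

HB.instance Definition _ := gen_eqMixin (Kspace X).
HB.instance Definition _ := gen_choiceMixin (Kspace X).
HB.instance Definition _ := isPointed.Build (Kspace X)
  (exist (fun A : set X => compact A) set0 compact0).

Definition vietoris_subbase_index : set (set X * bool) := [set p | open p.1].

Definition vietoris_subbase (p : set X * bool) : set (Kspace X) :=
  if p.2 then [set A | proj1_sig A `<=` p.1]
  else [set A | proj1_sig A `&` p.1 !=set0].

HB.instance Definition _ := @isSubBaseTopological.Build (Kspace X)
  (set X * bool)%type vietoris_subbase_index vietoris_subbase.
End Vietoris.

Definition K_le (X : topologicalType) (A B : Kspace X) : Prop :=
  proj1_sig A `<=` proj1_sig B.

From HB Require Import structures.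
From mathcomp Require Import all_boot all_classical topology finmap.
Local Open Scope classical_set_scope.

(* Two compactness facts drive both reductions: the union of a compact family
   of compact sets is compact, and for compact A the compact subsets of A form
   a compact subset of K(X) (an ultrafilter on them converges to the set of
   points of A whose every neighbourhood is met by almost all its members).
   Hence A |-> K(A) and KK |-> \bigcup KK are Tukey-convergent maps, in
   opposite directions. *)

Lemma tukey_ge_convergent (P Q : Type) (leP : P -> P -> Prop)
    (leQ : Q -> Q -> Prop) (phi : P -> Q) :
  (forall q, exists p, forall p', leP p p' -> leQ q (phi p')) ->
  tukey_ge leP leQ.
Proof.
move=> phi_conv; exists phi => C cofC q; have [p phi_up] := phi_conv q.
by have [c Cc le_pc] := cofC p; exists (phi c); [exists c | exact: phi_up].
Qed.

(* The library proves [compact_cover] for pointed spaces only; a nonempty set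
   supplies a point. *)
Definition pointed_at {T : topologicalType} (x0 : T) : Type := T.
HB.instance Definition _ (T : topologicalType) (x0 : T) :=
  Topological.on (pointed_at x0).
HB.instance Definition _ (T : topologicalType) (x0 : T) :=
  isPointed.Build (pointed_at x0) x0.

Lemma compact_coverP {T : topologicalType} (A : set T) :
  compact A <-> cover_compact A.
Proof.
have [->|/set0P [x0 _]] := eqVneq A set0.
  split=> _; last exact: compact0.
  by move=> I D f _ _; exists fset0.
have E : compact A = cover_compact A :=
  congr1 (fun P => P A) (@compact_cover (pointed_at x0)).
by rewrite E.
Qed.

Section Hyperspace.
Context (X : topologicalType).

Lemma open_vietoris_subbase (U : set X) (b : bool) :
  open U -> open (vietoris_subbase (U, b)).
Proof.
move=> oU; exists [set vietoris_subbase (U, b)]; last by rewrite bigcup_set1.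
move=> _ ->; exists [fset (U, b)]%fset; last by rewrite set_fset1 bigcap_set1.
by move=> _ /[!inE] /eqP ->; apply/mem_set.
Qed.

Lemma vietoris_cvg (F : set_system (Kspace X)) (L : Kspace X) : Filter F ->
  (forall U b, open U -> vietoris_subbase (U, b) L ->
    F (vietoris_subbase (U, b))) ->
  F --> L.
Proof.
move=> FF FL W; rewrite nbhsE => -[_ [[BB finBB <-] [B BBB BL]] BW].
apply: (filterS BW); apply: (filterS (bigcup_sup BBB)).
have [E sE eB] := finBB B BBB; rewrite -eB in BL *.
apply: filter_bigI => -[U b] Eub; have /set_mem oU := sE _ Eub.
exact: FL oU (BL _ Eub).
Qed.

Lemma compact_bigcup_Kspace (KK : set (Kspace X)) :
  compact KK -> compact (\bigcup_(A in KK) proj1_sig A).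
Proof.
move/compact_coverP => cKK; apply/compact_coverP => I D f fop cov.
pose box (E : {fset I}) := vietoris_subbase (cover [set` E] f, true).
have box_open E : {subset E <= D} -> open (box E).
  move=> ED; apply: open_vietoris_subbase; apply: bigcup_open => i Ei.
  exact/fop/set_mem/ED.
have KK_box : KK `<=` cover [set E | {subset E <= D}] box.
  move=> A KKA; have /compact_coverP cA := proj2_sig A.
  have [E ED AE] := cA I D f fop (fun x Ax => cov x (ex_intro2 _ _ A KKA Ax)).
  by exists E.
have [EE EE_D KK_EE] := cKK _ _ box box_open KK_box.
exists (\bigcup_(E <- EE) E)%fset.
  move=> i /bigfcupP [E /andP [EEE _] Ei].
  exact: (set_mem (EE_D E EEE)) i Ei.
move=> x [A KKA Ax]; have [E EEE AE] := KK_EE A KKA.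
have [i Ei fxi] := AE x Ax; exists i => //.
by apply/bigfcupP; exists E; rewrite ?EEE.
Qed.

Definition lower_limit (F : set_system (Kspace X)) : set X :=
  [set x | forall U, open U -> U x ->
    F [set B : Kspace X | proj1_sig B `&` U !=set0]].

Lemma closed_lower_limit F : closed (lower_limit F).
Proof.
move=> x clx U oU Ux.
have [y [Fy Uy]] := clx U (open_nbhs_nbhs (conj oU Ux)).
exact: Fy U oU Uy.
Qed.

Lemma ultra_sub_open_of_lower_limit (F : set_system (Kspace X)) (A U : set X) :
  UltraFilter F -> compact A -> F [set B : Kspace X | proj1_sig B `<=` A] ->
  open U -> A `&` lower_limit F `<=` U ->
  F [set B : Kspace X | proj1_sig B `<=` U].
Proof.
move=> UF cA FA oU AFU; pose R := A `&` ~` U.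
pose hit V := [set B : Kspace X | proj1_sig B `&` V !=set0].
pose D := [set V | open V /\ F (~` hit V)].
have R_D : R `<=` cover D id.
  move=> x [Ax nUx]; have : ~ lower_limit F x by move=> Fx; apply/nUx/AFU.
  move=> /existsNP [V /not_implyP [oV /not_implyP [Vx nFV]]].
  by have [//|FnV] := in_ultra_setVsetC (hit V) UF; exists V.
have /compact_coverP cR : compact R := compact_closedI cA (open_closedC oU).
have [E ED RE] := cR _ D id (fun V DV => DV.1) R_D.
have FE : F (\bigcap_(V in [set` E]) ~` hit V).
  by apply: filter_bigI => V EV; have [] := set_mem (ED V EV).
apply: filterS (filterI FA FE) => B [BA BE] y By; apply: contrapT => nUy.
have [V EV Vy] := RE y (conj (BA y By) nUy).
by apply: (BE V EV); exists y.
Qed.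

Lemma compact_Kspace_sub (A : set X) :
  compact A -> compact [set B : Kspace X | proj1_sig B `<=` A].
Proof.
move=> cA; rewrite compact_ultra => F UF FA.
have cL := compact_closedI cA (@closed_lower_limit F).
exists (exist _ _ cL); split; first by move=> x [].
apply: vietoris_cvg => U [] oU /=; first exact: ultra_sub_open_of_lower_limit.
by case=> x [[_ Fx] Ux]; exact: Fx U oU Ux.
Qed.

Definition Kunion (KK : Kspace (Kspace X)) : Kspace X :=
  exist _ _ (@compact_bigcup_Kspace (proj1_sig KK) (proj2_sig KK)).

Definition Kdown (A : Kspace X) : Kspace (Kspace X) :=
  exist _ _ (@compact_Kspace_sub (proj1_sig A) (proj2_sig A)).

Lemma tukey_ge_Kspace_hyperspace : tukey_ge (@K_le X) (@K_le (Kspace X)).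
Proof.
apply: (@tukey_ge_convergent _ _ _ _ Kdown) => KK; exists (Kunion KK).
by move=> A KKA B KKB x Bx; apply: KKA; exists B.
Qed.

Lemma tukey_ge_hyperspace_Kspace : tukey_ge (@K_le (Kspace X)) (@K_le X).
Proof.
apply: (@tukey_ge_convergent _ _ _ _ Kunion) => A.
exists (exist _ [set A] (@compact_set1 _ A)) => KK KKA x Ax.
by exists A => //; apply: KKA.
Qed.

End Hyperspace.

Theorem mainTheorem5 (X : topologicalType) (hX : tychonoff_space X) :
  tukey_eq (@K_le X) (@K_le (Kspace X)).
Proof.
split; [exact: tukey_ge_Kspace_hyperspace | exact: tukey_ge_hyperspace_Kspace].
Qed.
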